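(* Let $M$ be a nonempty finite metric space with $m = \#M$ points, let $n \ge m$ be an integer and let $t>0$. Then $$d_{GH}(t\Delta_n, M) = d_{GH}\bigl(\mathcal{H}(t\Delta_n), \mathcal{H}(M)\bigr).$$
   Context: A simplex $t\Delta_n$ is the metric space with $n$ points, any two distinct ones at distance $t$. For a compact metric space $X$, $\mathcal{H}(X)$ is the set of all nonempty closed subsets of $X$ with the Hausdorff distance $|AB| = \max\{\sup_{a\in A}\inf_{b\in B}|ab|, \sup_{b\in B}\inf_{a\in A}|ab|\}$. $d_{GH}$ is the Gromov–Hausdorff distance (the infimum of $r$ such that there is a metric space $Z$ containing isometric copies $X',Y'$ of $X,Y$ with Hausdorff distance $|X'Y'|_Z\le r$). *)

From Stdlib Require Import Reals Lra Lia List ClassicalEpsilon.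
Open Scope R_scope.

Definition is_metric {X : Type} (d : X -> X -> R) : Prop :=
  (forall x y, 0 <= d x y) /\
  (forall x y, d x y = 0 <-> x = y) /\
  (forall x y, d x y = d y x) /\
  (forall x y z, d x z <= d x y + d y z).

Definition is_glb (S : R -> Prop) (r : R) : Prop :=
  (forall x, S x -> r <= x) /\ (forall y, (forall x, S x -> y <= x) -> y <= r).

(* Supremum / infimum of a set of reals (meaningful when it exists). *)
Definition Sup (S : R -> Prop) : R := epsilon (inhabits 0) (is_lub S).
Definition Inf (S : R -> Prop) : R := epsilon (inhabits 0) (is_glb S).

Definition hausdorff {X : Type} (d : X -> X -> R) (A B : X -> Prop) : R :=
  Rmax (Sup (fun s => exists a, A a /\ s = Inf (fun u => exists b, B b /\ u = d a b)))
       (Sup (fun s => exists b, B b /\ s = Inf (fun u => exists a, A a /\ u = d a b))).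

Definition isometric_embedding {X Z : Type} (dX : X -> X -> R) (dZ : Z -> Z -> R)
  (f : X -> Z) : Prop := forall x y, dZ (f x) (f y) = dX x y.

Definition image {X Z : Type} (f : X -> Z) : Z -> Prop := fun z => exists x, f x = z.

Definition dGH (X : Type) (dX : X -> X -> R) (Y : Type) (dY : Y -> Y -> R) : R :=
  Inf (fun r => exists (Z : Type) (dZ : Z -> Z -> R), is_metric dZ /\
         exists (f : X -> Z) (g : Y -> Z),
           isometric_embedding dX dZ f /\ isometric_embedding dY dZ g /\
           hausdorff dZ (image f) (image g) <= r).

Definition closed {X : Type} (d : X -> X -> R) (A : X -> Prop) : Prop :=
  forall x, (forall eps, 0 < eps -> exists a, A a /\ d x a < eps) -> A x.

Definition hyp (X : Type) (d : X -> X -> R) : Type :=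
  { A : X -> Prop | (exists x, A x) /\ closed d A }.

Definition hyp_dist {X : Type} (d : X -> X -> R) (A B : hyp X d) : R :=
  hausdorff d (proj1_sig A) (proj1_sig B).

Definition simplex (n : nat) : Type := { i : nat | (i < n)%nat }.

Definition simplex_dist (n : nat) (t : R) (i j : simplex n) : R :=
  if Nat.eq_dec (proj1_sig i) (proj1_sig j) then 0 else t.

From Stdlib Require Import Reals Lra Lia List ClassicalEpsilon.
From Stdlib Require Import Classical FunctionalExtensionality PropExtensionality ProofIrrelevance.
Open Scope R_scope.

(* Both distances are instances of one formula. Let X carry the metric with all nonzero
   distances equal to t, let Y be a finite metric space of diameter D, and let e be the best
   separation of distinct points achievable by a surjection X -> Y (e = 0 when #X > #Y, and
   e is the least nonzero distance of Y when #X = #Y >= 2). Then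
   2 d_GH(X, Y) = max(0, D - t, t - e): the upper bound comes from gluing X to Y along an
   optimal surjection, the lower bounds from the triangle inequality along an almost optimal
   correspondence. The hyperspace H(t Delta_n) is again such a space, with 2^n - 1 points, while
   H(M) has 2^m - 1 points and the same diameter and least nonzero distance as M, both realised
   by singletons. As 2^m - 1 < 2^n - 1 exactly when m < n, the formula gives the same value on
   both sides. *)

(** * Infima and suprema *)

Lemma is_lub_Sup (S : R -> Prop) :
  (exists x, S x) -> (exists K, forall x, S x -> x <= K) -> is_lub S (Sup S).
Proof.
  intros Hne [K HK]; unfold Sup; apply epsilon_spec.
  destruct (completeness S) as [s Hs]; [now exists K | exact Hne | now exists s].
Qed.

Lemma is_glb_Inf (S : R -> Prop) :
  (exists x, S x) -> (exists K, forall x, S x -> K <= x) -> is_glb S (Inf S).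
Proof.
  intros [x Hx] [K HK]; unfold Inf; apply epsilon_spec.
  destruct (completeness (fun y => S (- y))) as [s [Hub Hleast]].
  - exists (- K); intros y Hy; specialize (HK _ Hy); lra.
  - exists (- x); now rewrite Ropp_involutive.
  - exists (- s); split.
    + intros z Hz; enough (- z <= s) by lra.
      apply Hub; now rewrite Ropp_involutive.
    + intros y Hy; enough (s <= - y) by lra.
      apply Hleast; intros z Hz; specialize (Hy _ Hz); lra.
Qed.

Lemma Inf_le (S : R -> Prop) x :
  (exists K, forall y, S y -> K <= y) -> S x -> Inf S <= x.
Proof. intros Hlb Hx; now apply (is_glb_Inf S); [exists x|..]. Qed.

Lemma Inf_ge (S : R -> Prop) K :
  (exists x, S x) -> (forall x, S x -> K <= x) -> K <= Inf S.
Proof. intros Hne HK; apply (is_glb_Inf S Hne); [now exists K | exact HK]. Qed.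

Lemma Inf_approx (S : R -> Prop) eps :
  (exists x, S x) -> (exists K, forall x, S x -> K <= x) -> 0 < eps ->
  exists x, S x /\ x < Inf S + eps.
Proof.
  intros Hne Hlb Heps; apply NNPP; intros Hfar.
  enough (Inf S + eps <= Inf S) by lra.
  apply (is_glb_Inf S Hne Hlb); intros x Hx.
  apply Rnot_lt_le; intros Hlt; apply Hfar; now exists x.
Qed.

Lemma Inf_eq (S : R -> Prop) F :
  (forall r, S r -> F <= r) -> (forall r, F < r -> S r) -> Inf S = F.
Proof.
  intros Hlow Hup.
  assert (HS : exists x, S x) by (exists (F + 1); apply Hup; lra).
  apply Rle_antisym.
  - apply Rle_plus_epsilon; intros eps Heps.
    apply Inf_le; [now exists F | apply Hup; lra].
  - now apply Inf_ge.
Qed.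

Lemma Sup_ge (S : R -> Prop) x :
  (exists K, forall y, S y -> y <= K) -> S x -> x <= Sup S.
Proof. intros Hub Hx; now apply (is_lub_Sup S); [exists x|..]. Qed.

Lemma Sup_le (S : R -> Prop) K :
  (exists x, S x) -> (forall x, S x -> x <= K) -> Sup S <= K.
Proof. intros Hne HK; apply (is_lub_Sup S Hne); [now exists K | exact HK]. Qed.

(** * Hausdorff distance *)

Definition excess {Z : Type} (d : Z -> Z -> R) (A B : Z -> Prop) : R :=
  Sup (fun s => exists a, A a /\ s = Inf (fun u => exists b, B b /\ u = d a b)).

Lemma hausdorff_excess {Z : Type} (d : Z -> Z -> R) (A B : Z -> Prop) :
  hausdorff d A B = Rmax (excess d A B) (excess (fun x y => d y x) B A).
Proof. reflexivity. Qed.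

Section Excess.
Context {Z : Type} (d : Z -> Z -> R) (A B : Z -> Prop).
Hypothesis d_nonneg : forall x y, 0 <= d x y.

Let dists_bounded_below a : exists K, forall u, (exists b, B b /\ u = d a b) -> K <= u.
Proof. exists 0; intros u [b [_ ->]]; apply d_nonneg. Qed.

Lemma excess_le r : (exists a, A a) -> (exists b, B b) ->
  (forall a, A a -> forall eps, 0 < eps -> exists b, B b /\ d a b < r + eps) ->
  excess d A B <= r.
Proof.
  intros [a0 Ha0] HB Hnear; apply Sup_le.
  { now exists (Inf (fun u => exists b, B b /\ u = d a0 b)), a0. }
  intros s [a [Ha ->]]; apply Rle_plus_epsilon; intros eps Heps.
  destruct (Hnear a Ha eps Heps) as [b [Hb Hab]].
  enough (Inf (fun u => exists b, B b /\ u = d a b) <= d a b) by lra.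
  apply Inf_le; [apply dists_bounded_below | now exists b].
Qed.

Lemma Inf_le_excess a K : (exists b, B b) -> (forall a b, A a -> B b -> d a b <= K) -> A a ->
  Inf (fun u => exists b, B b /\ u = d a b) <= excess d A B.
Proof.
  intros [b Hb] HK Ha; apply Sup_ge; [|now exists a].
  exists K; intros s [a' [Ha' ->]].
  apply Rle_trans with (d a' b); [|now apply HK].
  apply Inf_le; [apply dists_bounded_below | now exists b].
Qed.
End Excess.

Section Hausdorff.
Context {Z : Type} (d : Z -> Z -> R) (A B : Z -> Prop).
Hypothesis d_nonneg : forall x y, 0 <= d x y.

Lemma hausdorff_le r : (exists a, A a) -> (exists b, B b) ->
  (forall a, A a -> forall eps, 0 < eps -> exists b, B b /\ d a b < r + eps) ->
  (forall b, B b -> forall eps, 0 < eps -> exists a, A a /\ d a b < r + eps) ->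
  hausdorff d A B <= r.
Proof.
  intros HA HB HAB HBA; rewrite hausdorff_excess.
  apply Rmax_lub; apply excess_le; auto.
Qed.

Lemma hausdorff_sym : (forall x y, d x y = d y x) -> hausdorff d A B = hausdorff d B A.
Proof.
  intros Hsym; rewrite !hausdorff_excess.
  replace (fun x y => d y x) with d by (do 2 (apply functional_extensionality; intro); apply Hsym).
  apply Rmax_comm.
Qed.

Section Bounded.
Variable K : R.
Hypothesis d_bounded : forall a b, A a -> B b -> d a b <= K.

Lemma Inf_le_hausdorff_l a : A a -> (exists b, B b) ->
  Inf (fun u => exists b, B b /\ u = d a b) <= hausdorff d A B.
Proof.
  intros Ha HB; rewrite hausdorff_excess.
  eapply Rle_trans; [now apply (Inf_le_excess d A B d_nonneg a K) | apply Rmax_l].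
Qed.

Lemma Inf_le_hausdorff_r b : B b -> (exists a, A a) ->
  Inf (fun u => exists a, A a /\ u = d a b) <= hausdorff d A B.
Proof.
  intros Hb HA; rewrite hausdorff_excess.
  eapply Rle_trans; [|apply Rmax_r].
  apply (Inf_le_excess (fun x y => d y x) B A) with K; auto.
Qed.

Lemma hausdorff_ge_l a r : A a -> (exists b, B b) ->
  (forall b, B b -> r <= d a b) -> r <= hausdorff d A B.
Proof.
  intros Ha [b Hb] Hr.
  apply Rle_trans with (2 := Inf_le_hausdorff_l a Ha (ex_intro _ b Hb)).
  apply Inf_ge; [now exists (d a b), b | intros u [b' [Hb' ->]]; auto].
Qed.

Lemma hausdorff_ge_r b r : B b -> (exists a, A a) ->
  (forall a, A a -> r <= d a b) -> r <= hausdorff d A B.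
Proof.
  intros Hb [a Ha] Hr.
  apply Rle_trans with (2 := Inf_le_hausdorff_r b Hb (ex_intro _ a Ha)).
  apply Inf_ge; [now exists (d a b), a | intros u [a' [Ha' ->]]; auto].
Qed.

Lemma hausdorff_near_l a r eps : A a -> (exists b, B b) -> hausdorff d A B <= r -> 0 < eps ->
  exists b, B b /\ d a b < r + eps.
Proof.
  intros Ha [b0 Hb0] Hr Heps.
  destruct (Inf_approx (fun u => exists b, B b /\ u = d a b) eps) as [u [[b [Hb ->]] Hu]];
    [now exists (d a b0), b0 | exists 0; intros u [b [_ ->]]; auto | exact Heps |].
  exists b; split; [exact Hb|].
  pose proof (Inf_le_hausdorff_l a Ha (ex_intro _ b0 Hb0)); lra.
Qed.

Lemma hausdorff_near_r b r eps : B b -> (exists a, A a) -> hausdorff d A B <= r -> 0 < eps ->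
  exists a, A a /\ d a b < r + eps.
Proof.
  intros Hb [a0 Ha0] Hr Heps.
  destruct (Inf_approx (fun u => exists a, A a /\ u = d a b) eps) as [u [[a [Ha ->]] Hu]];
    [now exists (d a0 b), a0 | exists 0; intros u [a [_ ->]]; auto | exact Heps |].
  exists a; split; [exact Ha|].
  pose proof (Inf_le_hausdorff_r b Hb (ex_intro _ a0 Ha0)); lra.
Qed.
End Bounded.
End Hausdorff.

Definition is_simplex_metric {X : Type} (d : X -> X -> R) (t : R) : Prop :=
  forall x y, (x = y -> d x y = 0) /\ (x <> y -> d x y = t).

Section SimplexMetric.
Context {X : Type} (d : X -> X -> R) (t : R).
Hypothesis Ht : 0 < t.
Hypothesis Hd : is_simplex_metric d t.

Lemma simplex_metric_cases x y : (x = y /\ d x y = 0) \/ (x <> y /\ d x y = t).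
Proof. destruct (classic (x = y)); [left | right]; split; auto; now apply Hd. Qed.

Lemma simplex_metric_le x y : d x y <= t.
Proof. destruct (simplex_metric_cases x y) as [[_ ->]|[_ ->]]; lra. Qed.

Lemma simplex_metric_is_metric : is_metric d.
Proof.
  split; [|split; [|split]].
  - intros x y; destruct (simplex_metric_cases x y) as [[_ ->]|[_ ->]]; lra.
  - intros x y; split; [|now apply Hd].
    destruct (simplex_metric_cases x y) as [[? _]|[_ ->]]; [auto | lra].
  - intros x y; destruct (simplex_metric_cases x y) as [[-> _]|[Hxy ->]]; [reflexivity|].
    symmetry; apply Hd; auto.
  - intros x y z; destruct (simplex_metric_cases x z) as [[_ ->]|[Hxz ->]].
    + destruct (simplex_metric_cases x y) as [[_ ->]|[_ ->]];
        destruct (simplex_metric_cases y z) as [[_ ->]|[_ ->]]; lra.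
    + destruct (simplex_metric_cases x y) as [[<- ->]|[_ ->]].
      * rewrite (proj2 (Hd x z) Hxz); lra.
      * destruct (simplex_metric_cases y z) as [[_ ->]|[_ ->]]; lra.
Qed.
End SimplexMetric.

Lemma simplex_dist_is_simplex_metric n t : is_simplex_metric (simplex_dist n t) t.
Proof.
  intros [i Hi] [j Hj]; unfold simplex_dist; simpl; split; intros Hij.
  - injection Hij as ->; now destruct Nat.eq_dec.
  - destruct Nat.eq_dec as [->|]; [|reflexivity].
    exfalso; apply Hij; now apply subset_eq_compat.
Qed.

(** * Gromov-Hausdorff distance from a simplex *)

Definition GH_admissible (X : Type) (dX : X -> X -> R) (Y : Type) (dY : Y -> Y -> R) (r : R) :=
  exists (Z : Type) (dZ : Z -> Z -> R), is_metric dZ /\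
    exists (f : X -> Z) (g : Y -> Z),
      isometric_embedding dX dZ f /\ isometric_embedding dY dZ g /\
      hausdorff dZ (image f) (image g) <= r.

Definition glue_dist {X Y : Type} (dX : X -> X -> R) (dY : Y -> Y -> R) (σ : X -> Y) (t ρ : R)
  (a b : X + Y) : R :=
  match a, b with
  | inl x, inl x' => dX x x'
  | inr y, inr y' => dY y y'
  | inl x, inr y | inr y, inl x => ρ + Rmin (dY (σ x) y) t
  end.

(* Capping the cross distances at [t] keeps the triangles x x' y valid; the price is paid
   by the triangles y x y', which is where [D - t <= 2 ρ] is needed. *)
Section Glue.
Context {X Y : Type} (dX : X -> X -> R) (dY : Y -> Y -> R) (σ : X -> Y) (t ρ D : R).
Hypothesis Ht : 0 < t.
Hypothesis HX : is_simplex_metric dX t.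
Hypothesis HY : is_metric dY.
Hypothesis HD : forall y y', dY y y' <= D.
Hypothesis Hρ : 0 < ρ.
Hypothesis H_diam : D - t <= 2 * ρ.
Hypothesis H_sep : forall x x', x <> x' -> t - dY (σ x) (σ x') <= 2 * ρ.

Lemma glue_dist_metric : is_metric (glue_dist dX dY σ t ρ).
Proof.
  destruct (simplex_metric_is_metric dX t Ht HX) as [Xnn [Xdef [Xsym Xtri]]].
  destruct HY as [Ynn [Ydef [Ysym Ytri]]].
  assert (Hcap : forall x y, 0 <= Rmin (dY (σ x) y) t /\ Rmin (dY (σ x) y) t <= t).
  { intros x y; split; [apply Rmin_glb; [apply Ynn | lra] | apply Rmin_r]. }
  split; [|split; [|split]].
  - intros [x|y] [x'|y']; simpl; auto.
    + destruct (Hcap x y'); lra.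
    + destruct (Hcap x' y); lra.
  - intros [x|y] [x'|y']; simpl; split; intros H; try discriminate.
    + f_equal; now apply Xdef.
    + injection H as ->; now apply Xdef.
    + destruct (Hcap x y'); lra.
    + destruct (Hcap x' y); lra.
    + f_equal; now apply Ydef.
    + injection H as ->; now apply Ydef.
  - intros [x|y] [x'|y']; simpl; auto.
  - intros [x|y] [x'|y'] [x''|y'']; simpl.
    + apply Xtri.
    + destruct (simplex_metric_cases dX t HX x x') as [[<- ->]|[_ ->]]; [lra|].
      destruct (Hcap x y''), (Hcap x' y''); lra.
    + destruct (simplex_metric_cases dX t HX x x'') as [[<- ->]|[Hne ->]].
      * destruct (Hcap x y'); lra.
      * pose proof (H_sep x x'' Hne); pose proof (Ytri (σ x) y' (σ x'')).
        pose proof (Ynn (σ x) y'); pose proof (Ynn (σ x'') y').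
        rewrite (Ysym y' (σ x'')) in *; unfold Rmin; repeat destruct Rle_dec; lra.
    + pose proof (Ytri (σ x) y' y''); pose proof (Ynn y' y'').
      unfold Rmin; repeat destruct Rle_dec; lra.
    + destruct (simplex_metric_cases dX t HX x' x'') as [[<- ->]|[_ ->]]; [lra|].
      destruct (Hcap x'' y), (Hcap x' y); lra.
    + pose proof (HD y y''); pose proof (Ytri y (σ x') y'').
      pose proof (Ynn (σ x') y); pose proof (Ynn (σ x') y'').
      rewrite (Ysym y (σ x')) in *; unfold Rmin; repeat destruct Rle_dec; lra.
    + pose proof (Ytri (σ x'') y' y); pose proof (Ynn y y').
      rewrite (Ysym y y') in *; unfold Rmin; repeat destruct Rle_dec; lra.
    + apply Ytri.
Qed.

Lemma GH_admissible_glue : (forall y, exists x, σ x = y) -> inhabited Y ->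
  GH_admissible X dX Y dY ρ.
Proof.
  intros Hsurj [y0].
  assert (Hdiag : forall x, glue_dist dX dY σ t ρ (inl x) (inr (σ x)) = ρ).
  { intros x; simpl; rewrite (proj2 (proj1 (proj2 HY) _ _) eq_refl).
    rewrite Rmin_left; lra. }
  destruct (Hsurj y0) as [x0 _].
  exists (X + Y)%type, (glue_dist dX dY σ t ρ); split; [apply glue_dist_metric|].
  exists inl, inr; split; [now intros ??|]; split; [now intros ??|].
  apply hausdorff_le;
    [apply glue_dist_metric | now exists (inl x0), x0 | now exists (inr y0), y0 | |].
  - intros a [x <-] eps Heps; exists (inr (σ x)); split; [now exists (σ x)|].
    rewrite Hdiag; lra.
  - intros b [y <-] eps Heps; destruct (Hsurj y) as [x <-].
    exists (inl x); split; [now exists x|]; rewrite Hdiag; lra.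
Qed.
End Glue.

Lemma GH_admissible_near {X Y : Type} (dX : X -> X -> R) (dY : Y -> Y -> R) KX KY r eps :
  inhabited X -> inhabited Y ->
  (forall x x', dX x x' <= KX) -> (forall y y', dY y y' <= KY) ->
  GH_admissible X dX Y dY r -> 0 < eps ->
  exists (Z : Type) (dZ : Z -> Z -> R) (f : X -> Z) (g : Y -> Z),
    is_metric dZ /\ isometric_embedding dX dZ f /\ isometric_embedding dY dZ g /\
    (forall x, exists y, dZ (f x) (g y) < r + eps) /\
    (forall y, exists x, dZ (f x) (g y) < r + eps).
Proof.
  intros [x0] [y0] HKX HKY [Z [dZ [HZ [f [g [Hf [Hg Hr]]]]]]] Heps.
  pose proof HZ as [Znn [_ [_ Ztri]]].
  set (K := KX + dZ (f x0) (g y0) + KY).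
  assert (HK : forall a b, image f a -> image g b -> dZ a b <= K).
  { intros a b [x <-] [y <-]; unfold K.
    pose proof (Ztri (f x) (f x0) (g y)); pose proof (Ztri (f x0) (g y0) (g y)).
    rewrite Hf, Hg in *; pose proof (HKX x x0); pose proof (HKY y0 y); lra. }
  exists Z, dZ, f, g; do 3 (split; [assumption|]); split.
  - intros x.
    destruct (hausdorff_near_l dZ (image f) (image g) Znn K HK (f x) r eps)
      as [b [[y <-] Hy]]; [now exists x | now exists (g y0), y0 | assumption | assumption |].
    now exists y.
  - intros y.
    destruct (hausdorff_near_r dZ (image f) (image g) Znn K HK (g y) r eps)
      as [a [[x <-] Hx]]; [now exists y | now exists (f x0), x0 | assumption | assumption |].
    now exists x.
Qed.

Section LowerBounds.
Context {X Y : Type} (dX : X -> X -> R) (dY : Y -> Y -> R) (t D : R).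
Hypothesis Ht : 0 < t.
Hypothesis HX : is_simplex_metric dX t.
Hypothesis HD : forall y y', dY y y' <= D.
Hypothesis inhX : inhabited X.
Hypothesis inhY : inhabited Y.

Let near r eps := GH_admissible_near dX dY t D r eps inhX inhY (simplex_metric_le dX t Ht HX) HD.

Lemma GH_admissible_nonneg r : GH_admissible X dX Y dY r -> 0 <= r.
Proof.
  intros Hr; apply Rle_plus_epsilon; intros eps Heps.
  destruct (near r eps Hr Heps) as [Z [dZ [f [g [[Znn _] [_ [_ [Hxy _]]]]]]]].
  destruct inhX as [x]; destruct (Hxy x) as [y Hy].
  pose proof (Znn (f x) (g y)); lra.
Qed.

Lemma GH_admissible_ge_dist r y1 y2 : GH_admissible X dX Y dY r -> dY y1 y2 - t <= 2 * r.
Proof.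
  intros Hr; apply Rle_plus_epsilon; intros eps Heps.
  destruct (near r (eps / 2) Hr ltac:(lra))
    as [Z [dZ [f [g [[_ [_ [Zsym Ztri]]] [Hf [Hg [_ Hyx]]]]]]]].
  destruct (Hyx y1) as [x1 Hx1], (Hyx y2) as [x2 Hx2].
  pose proof (Ztri (g y1) (f x1) (g y2)); pose proof (Ztri (f x1) (f x2) (g y2)).
  pose proof (simplex_metric_le dX t Ht HX x1 x2).
  rewrite Hf, Hg, (Zsym (g y1) (f x1)) in *; lra.
Qed.

(* Matching each [x] to a near [h x], a collapsing pair gives [t <= 2 (r + eps) + e]. *)
Lemma GH_admissible_ge_collapse r e :
  (forall h : X -> Y, exists x x', x <> x' /\ dY (h x) (h x') <= e) ->
  GH_admissible X dX Y dY r -> t - e <= 2 * r.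
Proof.
  intros Hcollapse Hr; apply Rle_plus_epsilon; intros eps Heps.
  destruct (near r (eps / 2) Hr ltac:(lra))
    as [Z [dZ [f [g [[_ [_ [Zsym Ztri]]] [Hf [Hg [Hxy _]]]]]]]].
  destruct (choice _ Hxy) as [h Hh].
  destruct (Hcollapse h) as [x [x' [Hne Hle]]].
  pose proof (Ztri (f x) (g (h x)) (f x')); pose proof (Ztri (g (h x)) (g (h x')) (f x')).
  pose proof (Hh x); pose proof (Hh x').
  rewrite Hf, Hg, (proj2 (HX x x') Hne), (Zsym (g (h x')) (f x')) in *; lra.
Qed.
End LowerBounds.

(* [e] is the largest separation of distinct points that a surjection [X -> Y] can achieve;
   the disjunct [t <= e] covers a one-point [X], where no two points can collapse. *)
Definition surjective_separation (X : Type) {Y : Type} (dY : Y -> Y -> R) (t e : R) : Prop :=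
  (exists σ : X -> Y, (forall y, exists x, σ x = y) /\
     forall x x', x <> x' -> e <= dY (σ x) (σ x')) /\
  (t <= e \/ forall h : X -> Y, exists x x', x <> x' /\ dY (h x) (h x') <= e).

Theorem dGH_simplex {X Y : Type} (dX : X -> X -> R) (dY : Y -> Y -> R) (t D e : R) :
  0 < t -> is_simplex_metric dX t -> is_metric dY ->
  (forall y y', dY y y' <= D) -> (exists y1 y2, dY y1 y2 = D) ->
  surjective_separation X dY t e ->
  dGH X dX Y dY = Rmax 0 (Rmax ((D - t) / 2) ((t - e) / 2)).
Proof.
  intros Ht HX HY HD [y1 [y2 HD12]] [[σ [Hsurj Hsep]] Hcollapse].
  assert (inhY : inhabited Y) by now constructor.
  assert (inhX : inhabited X) by (destruct (Hsurj y1) as [x _]; now constructor).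
  unfold dGH; apply Inf_eq.
  - intros r Hr.
    pose proof (GH_admissible_nonneg dX dY t D Ht HX HD inhX inhY r Hr).
    pose proof (GH_admissible_ge_dist dX dY t D Ht HX HD inhX inhY r y1 y2 Hr).
    apply Rmax_lub; [assumption|]; apply Rmax_lub; [lra|].
    destruct Hcollapse as [Hte | Hcollapse]; [lra|].
    pose proof (GH_admissible_ge_collapse dX dY t D Ht HX HD inhX inhY r e Hcollapse Hr); lra.
  - intros r [Hr0 [Hr1 Hr2]%Rmax_Rlt]%Rmax_Rlt.
    apply (GH_admissible_glue dX dY σ t r D); auto; try lra.
    intros x x' Hne; specialize (Hsep x x' Hne); lra.
Qed.

(** * Finite sets and finite metric spaces *)

Definition has_card (T : Type) (k : nat) : Prop :=
  exists l : list T, NoDup l /\ (forall x, In x l) /\ length l = k.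

Section Counting.
Context {X Y : Type}.

Lemma has_card_pigeonhole N k : has_card X N -> has_card Y k -> (k < N)%nat ->
  forall h : X -> Y, exists x x', x <> x' /\ h x = h x'.
Proof.
  intros [lx [Hnx [Hfx Hlx]]] [ly [Hny [Hfy Hly]]] Hlt h.
  apply NNPP; intros Hinj.
  assert (Hnd : NoDup (map h lx)).
  { apply NoDup_map_NoDup_ForallPairs; [|assumption].
    intros x x' _ _ Heq; apply NNPP; intros Hne; apply Hinj; now exists x, x'. }
  pose proof (NoDup_incl_length Hnd (fun y _ => Hfy y)); rewrite length_map in *; lia.
Qed.

Lemma has_card_inj_surj N : has_card X N -> has_card Y N ->
  forall h : X -> Y, (forall x x', h x = h x' -> x = x') -> forall y, exists x, h x = y.
Proof.
  intros [lx [Hnx [Hfx Hlx]]] [ly [Hny [Hfy Hly]]] h Hinj y.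
  assert (Hnd : NoDup (map h lx)).
  { apply NoDup_map_NoDup_ForallPairs; [|assumption]; intros x x' _ _; apply Hinj. }
  assert (Hfull : incl ly (map h lx)).
  { apply NoDup_length_incl; [assumption | rewrite length_map; lia | intros y' _; apply Hfy]. }
  destruct (proj1 (in_map_iff h lx y) (Hfull y (Hfy y))) as [x [Hx _]]; now exists x.
Qed.

Lemma has_card_surjection N k : has_card X N -> has_card Y k -> (1 <= k <= N)%nat ->
  exists σ : X -> Y, (forall y, exists x, σ x = y) /\
    (k = N -> forall x x', σ x = σ x' -> x = x').
Proof.
  intros [lx [Hnx [Hfx Hlx]]] [ly [Hny [Hfy Hly]]] Hk.
  assert (x0 : X) by (destruct lx as [|x0 ?]; [simpl in Hlx; lia | exact x0]).
  assert (y0 : Y) by (destruct ly as [|y0 ?]; [simpl in Hly; lia | exact y0]).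
  destruct (choice (fun x j => (j < N)%nat /\ nth j lx x0 = x)) as [idx Hidx].
  { intros x; destruct (In_nth lx x x0 (Hfx x)) as [j [Hj Hjx]].
    exists j; split; [lia | exact Hjx]. }
  (* the [j]-th element of [lx] goes to the [j]-th element of [ly], or to [y0] if [k <= j] *)
  exists (fun x => nth (idx x) ly y0); split.
  - intros y; destruct (In_nth ly y y0 (Hfy y)) as [j [Hj <-]].
    exists (nth j lx x0); f_equal.
    destruct (Hidx (nth j lx x0)) as [Hlt Heq].
    apply (proj1 (NoDup_nth lx x0) Hnx); [lia | lia | exact Heq].
  - intros <- x x' Heq.
    destruct (Hidx x) as [Hlt <-], (Hidx x') as [Hlt' <-]; f_equal.
    apply (proj1 (NoDup_nth ly y0) Hny); [lia | lia | exact Heq].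
Qed.
End Counting.

Lemma list_argmax {A : Type} (g : A -> R) (L : list A) : L <> nil ->
  exists a, In a L /\ forall b, In b L -> g b <= g a.
Proof.
  induction L as [|a L IH]; intros HL; [congruence|].
  destruct L as [|a' L].
  - exists a; split; [now left|]; intros b [<-|[]]; lra.
  - destruct (IH ltac:(discriminate)) as [c [Hc Hmax]].
    destruct (Rle_dec (g a) (g c)).
    + exists c; split; [now right|]; intros b [<-|Hb]; auto.
    + exists a; split; [now left|]; intros b [<-|Hb]; [lra|]; specialize (Hmax b Hb); lra.
Qed.

Section FiniteMetric.
Context {X : Type} (d : X -> X -> R) (l : list X).
Hypothesis Hl : forall x, In x l.

Lemma finite_diameter : inhabited X -> exists a b, forall x y, d x y <= d a b.
Proof.
  intros [x0].
  destruct (list_argmax (fun p => d (fst p) (snd p)) (list_prod l l)) as [[a b] [_ Hmax]].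
  - pose proof (in_prod l l x0 x0 (Hl x0) (Hl x0)); intros E; now rewrite E in *.
  - exists a, b; intros x y; apply (Hmax (x, y)), in_prod; apply Hl.
Qed.

Lemma finite_min_separation : (exists x y : X, x <> y) ->
  exists a b, a <> b /\ forall x y, x <> y -> d a b <= d x y.
Proof.
  intros [x0 [y0 Hne0]].
  set (distinct := fun p : X * X =>
         if excluded_middle_informative (fst p = snd p) then false else true).
  assert (Hdistinct : forall x y, In (x, y) (filter distinct (list_prod l l)) <-> x <> y).
  { intros x y; rewrite filter_In; unfold distinct; simpl.
    destruct excluded_middle_informative as [E|E]; split.
    - now intros [_ F].
    - contradiction.
    - now intros _.
    - intros _; split; [apply in_prod; apply Hl | reflexivity]. }
  destruct (list_argmax (fun p => - d (fst p) (snd p)) (filter distinct (list_prod l l)))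
    as [[a b] [Hab Hmin]].
  - intros E; apply (Hdistinct x0 y0) in Hne0; now rewrite E in Hne0.
  - exists a, b; split; [now apply Hdistinct|].
    intros x y Hxy; apply Hdistinct in Hxy; specialize (Hmin _ Hxy); simpl in Hmin; lra.
Qed.

(* In a finite metric space every point is isolated, so every subset is closed. *)
Lemma finite_closed (A : X -> Prop) : is_metric d -> closed d A.
Proof.
  intros [Dnn [Ddef _]] x Hx.
  destruct (classic (exists x y : X, x <> y)) as [Hne | Hsingle].
  - destruct (finite_min_separation Hne) as [a [b [Hab Hmin]]].
    assert (Hpos : 0 < d a b).
    { destruct (Rle_lt_or_eq_dec _ _ (Dnn a b)) as [|E]; [assumption|].
      symmetry in E; now apply Ddef in E. }
    destruct (Hx _ Hpos) as [y [Hy Hxy]].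
    destruct (classic (x = y)) as [-> | Hne']; [assumption|].
    specialize (Hmin x y Hne'); lra.
  - destruct (Hx 1 Rlt_0_1) as [y [Hy _]].
    destruct (classic (x = y)) as [-> | Hne']; [assumption|].
    exfalso; apply Hsingle; now exists x, y.
Qed.
End FiniteMetric.

(** * The hyperspace *)

Lemma hyp_ext {X : Type} (d : X -> X -> R) (A B : hyp X d) :
  (forall x, proj1_sig A x <-> proj1_sig B x) -> A = B.
Proof.
  destruct A as [A HA], B as [B HB]; simpl; intros Hiff; apply subset_eq_compat.
  apply functional_extensionality; intros x; apply propositional_extensionality, Hiff.
Qed.

Lemma hyp_nonempty {X : Type} (d : X -> X -> R) (A : hyp X d) : exists x, proj1_sig A x.
Proof. apply (proj2_sig A). Qed.

Section Hyperspace.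
Context {X : Type} (d : X -> X -> R) (Dm : R).
Hypothesis Hd : is_metric d.
Hypothesis Hbd : forall x y, d x y <= Dm.

Let d_nonneg : forall x y, 0 <= d x y := proj1 Hd.
Let d_bounded (A B : X -> Prop) : forall a b, A a -> B b -> d a b <= Dm := fun a b _ _ => Hbd a b.

Lemma hyp_dist_nonneg (A B : hyp X d) : 0 <= hyp_dist d A B.
Proof.
  destruct (hyp_nonempty d A) as [a Ha].
  apply (hausdorff_ge_l d (proj1_sig A) (proj1_sig B) d_nonneg Dm (d_bounded _ _) a);
    auto using hyp_nonempty.
Qed.

Lemma hyp_dist_le (A B : hyp X d) : hyp_dist d A B <= Dm.
Proof.
  apply hausdorff_le; auto using hyp_nonempty.
  - intros a _ eps Heps; destruct (hyp_nonempty d B) as [b Hb].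
    exists b; split; [exact Hb|]; pose proof (Hbd a b); lra.
  - intros b _ eps Heps; destruct (hyp_nonempty d A) as [a Ha].
    exists a; split; [exact Ha|]; pose proof (Hbd a b); lra.
Qed.

Lemma hyp_dist_near_l (A B : hyp X d) a r eps : hyp_dist d A B <= r -> proj1_sig A a -> 0 < eps ->
  exists b, proj1_sig B b /\ d a b < r + eps.
Proof.
  intros Hr Ha Heps.
  apply (hausdorff_near_l d (proj1_sig A) (proj1_sig B) d_nonneg Dm (d_bounded _ _));
    auto using hyp_nonempty.
Qed.

Lemma hyp_dist_near_r (A B : hyp X d) b r eps : hyp_dist d A B <= r -> proj1_sig B b -> 0 < eps ->
  exists a, proj1_sig A a /\ d a b < r + eps.
Proof.
  intros Hr Hb Heps.
  apply (hausdorff_near_r d (proj1_sig A) (proj1_sig B) d_nonneg Dm (d_bounded _ _));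
    auto using hyp_nonempty.
Qed.

Lemma hyp_dist_self (A : hyp X d) : hyp_dist d A A = 0.
Proof.
  apply Rle_antisym; [|apply hyp_dist_nonneg].
  apply hausdorff_le; auto using hyp_nonempty;
    intros a Ha eps Heps; exists a;
    (split; [exact Ha | rewrite (proj2 (proj1 (proj2 Hd) a a) eq_refl); lra]).
Qed.

Lemma hyp_dist_is_metric : is_metric (hyp_dist d).
Proof.
  pose proof Hd as [_ [_ [Dsym Dtri]]].
  split; [|split; [|split]].
  - apply hyp_dist_nonneg.
  - intros A B; split; [intros Hzero | intros ->; apply hyp_dist_self].
    apply hyp_ext; intros x; split; intros Hx.
    + apply (proj2 (proj2_sig B)); intros eps Heps.
      destruct (hyp_dist_near_l A B x 0 eps (Req_le _ _ Hzero) Hx Heps) as [b [Hb Hxb]].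
      exists b; split; [exact Hb | lra].
    + apply (proj2 (proj2_sig A)); intros eps Heps.
      destruct (hyp_dist_near_r A B x 0 eps (Req_le _ _ Hzero) Hx Heps) as [a [Ha Hax]].
      exists a; split; [exact Ha | rewrite Dsym; lra].
  - intros A B; apply hausdorff_sym, Dsym.
  - intros A B C; apply hausdorff_le; auto using hyp_nonempty.
    + intros a Ha eps Heps.
      destruct (hyp_dist_near_l A B a _ (eps / 2) (Rle_refl _) Ha ltac:(lra)) as [b [Hb Hab]].
      destruct (hyp_dist_near_l B C b _ (eps / 2) (Rle_refl _) Hb ltac:(lra)) as [c [Hc Hbc]].
      exists c; split; [exact Hc|]; pose proof (Dtri a b c); lra.
    + intros c Hc eps Heps.
      destruct (hyp_dist_near_r B C c _ (eps / 2) (Rle_refl _) Hc ltac:(lra)) as [b [Hb Hbc]].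
      destruct (hyp_dist_near_r A B b _ (eps / 2) (Rle_refl _) Hb ltac:(lra)) as [a [Ha Hab]].
      exists a; split; [exact Ha|]; pose proof (Dtri a b c); lra.
Qed.

Lemma hyp_dist_ge_separation e (A B : hyp X d) : (forall a b, a <> b -> e <= d a b) ->
  A <> B -> e <= hyp_dist d A B.
Proof.
  intros Hsep HAB.
  destruct (classic (exists x, proj1_sig A x /\ ~ proj1_sig B x)) as [[x [HAx HBx]] | HA].
  - apply (hausdorff_ge_l d (proj1_sig A) (proj1_sig B) d_nonneg Dm (d_bounded _ _) x);
      auto using hyp_nonempty.
    intros b Hb; apply Hsep; intros ->; contradiction.
  - assert (HB : exists x, proj1_sig B x /\ ~ proj1_sig A x).
    { apply NNPP; intros HB; apply HAB, hyp_ext; intros x; split; intros Hx;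
        apply NNPP; intros Hx'; [apply HA | apply HB]; now exists x. }
    destruct HB as [x [HBx HAx]].
    apply (hausdorff_ge_r d (proj1_sig A) (proj1_sig B) d_nonneg Dm (d_bounded _ _) x);
      auto using hyp_nonempty.
    intros a Ha; apply Hsep; intros ->; contradiction.
Qed.
End Hyperspace.

Lemma hyp_dist_simplex_metric {X : Type} (d : X -> X -> R) t : 0 < t ->
  is_simplex_metric d t -> is_simplex_metric (hyp_dist d) t.
Proof.
  intros Ht Hd.
  pose proof (simplex_metric_is_metric d t Ht Hd) as Hm.
  pose proof (simplex_metric_le d t Ht Hd) as Hle.
  intros A B; split; [intros ->; now apply (hyp_dist_self d t) | intros HAB].
  apply Rle_antisym; [now apply (hyp_dist_le d t) |].
  apply (hyp_dist_ge_separation d t); auto.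
  intros a b Hab; now rewrite (proj2 (Hd a b) Hab); apply Rle_refl.
Qed.

Lemma singleton_closed {X : Type} (d : X -> X -> R) (a : X) :
  is_metric d -> closed d (fun x => x = a).
Proof.
  intros [Dnn [Ddef _]] x Hx; apply Ddef, Rle_antisym; [|apply Dnn].
  apply Rnot_lt_le; intros Hlt; destruct (Hx (d x a) Hlt) as [a' [-> Ha']]; lra.
Qed.

Definition hyp_singleton {X : Type} (d : X -> X -> R) (Hd : is_metric d) (a : X) : hyp X d :=
  exist _ (fun x => x = a) (conj (ex_intro _ a eq_refl) (singleton_closed d a Hd)).

Lemma hyp_dist_singleton {X : Type} (d : X -> X -> R) (Hd : is_metric d) (a b : X) :
  hyp_dist d (hyp_singleton d Hd a) (hyp_singleton d Hd b) = d a b.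
Proof.
  assert (Dnn : forall x y, 0 <= d x y) by apply Hd.
  unfold hyp_dist; simpl; apply Rle_antisym.
  - apply hausdorff_le; auto; [now exists a | now exists b |..].
    + intros a' -> eps Heps; exists b; split; [reflexivity | lra].
    + intros b' -> eps Heps; exists a; split; [reflexivity | lra].
  - apply (hausdorff_ge_l d _ _ Dnn (d a b)) with a;
      [now intros ?? -> -> | reflexivity | now exists b |].
    intros b' ->; apply Rle_refl.
Qed.

Lemma hyp_singleton_inj {X : Type} (d : X -> X -> R) (Hd : is_metric d) (a b : X) :
  hyp_singleton d Hd a = hyp_singleton d Hd b -> a = b.
Proof.
  intros E; apply (f_equal (fun A => proj1_sig A a)) in E; simpl in E.
  now rewrite <- E.
Qed.

Fixpoint nonempty_sublists {X : Type} (l : list X) : list (list X) :=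
  match l with
  | nil => nil
  | x :: l => nonempty_sublists l ++ (x :: nil) :: map (cons x) (nonempty_sublists l)
  end.

Definition members {X : Type} (s : list X) : X -> Prop := fun y => In y s.

Lemma NoDup_map_refine {A B C : Type} (f : A -> B) (g : A -> C) (L : list A) :
  NoDup (map f L) -> (forall a b, In a L -> In b L -> g a = g b -> f a = f b) -> NoDup (map g L).
Proof.
  induction L as [|a L IH]; simpl; intros Hf Hgf; [constructor|].
  inversion_clear Hf as [|? ? Hnotin Hf']; constructor.
  - intros [b [Hb HbL]]%in_map_iff; apply Hnotin.
    rewrite (Hgf a b); auto; now apply in_map.
  - apply IH; auto.
Qed.

Section NonemptySublists.
Context {X : Type}.

Lemma length_nonempty_sublists (l : list X) :
  (length (nonempty_sublists l) + 1 = 2 ^ length l)%nat.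
Proof.
  induction l as [|x l IH]; simpl; [reflexivity|].
  rewrite length_app; simpl; rewrite length_map; lia.
Qed.

Lemma in_nonempty_sublists (l s : list X) : In s (nonempty_sublists l) -> s <> nil /\ incl s l.
Proof.
  revert s; induction l as [|x l IH]; intros s Hs; simpl in Hs; [contradiction|].
  apply in_app_or in Hs as [Hs | [<- | [s' [<- Hs']]%in_map_iff]].
  - destruct (IH s Hs) as [Hne Hincl]; split; [exact Hne | now apply incl_tl].
  - split; [discriminate | intros y [<- | []]; now left].
  - split; [discriminate | apply incl_cons; [now left | apply incl_tl, IH, Hs']].
Qed.

Lemma nonempty_sublists_complete (l : list X) (p : X -> Prop) : (exists x, In x l /\ p x) ->
  exists s, In s (nonempty_sublists l) /\ forall y, In y s <-> In y l /\ p y.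
Proof.
  induction l as [|x l IH]; intros [z [Hz Hpz]]; [destruct Hz|]; simpl.
  destruct (classic (exists y, In y l /\ p y)) as [Hl | Hl]; [destruct (IH Hl) as [s [Hs Hsp]]|].
  - destruct (classic (p x)) as [Hx | Hx].
    + exists (x :: s); split; [apply in_or_app; right; right; now apply in_map|].
      intros y; simpl; rewrite Hsp; split; [intros [<- | [? ?]]; tauto | tauto].
    + exists s; split; [apply in_or_app; now left|].
      intros y; simpl; rewrite Hsp; split; [tauto | intros [[<- | ?] ?]; tauto].
  - assert (Hx : z = x /\ p x) by (destruct Hz as [<- | Hz]; [auto | exfalso; apply Hl; eauto]).
    destruct Hx as [-> Hx].
    exists (x :: nil); split; [apply in_or_app; right; now left|].
    intros y; simpl; split; [intros [<- | []]; tauto |].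
    intros [[<- | Hy] Hpy]; [tauto | exfalso; eauto].
Qed.

Lemma NoDup_members_nonempty_sublists (l : list X) :
  NoDup l -> NoDup (map members (nonempty_sublists l)).
Proof.
  induction l as [|x l IH]; intros Hnd; simpl; [constructor|].
  inversion_clear Hnd as [|? ? Hx Hl].
  assert (Hnotx : forall s, In s (nonempty_sublists l) -> ~ In x s).
  { intros s Hs Hxs; apply Hx, (in_nonempty_sublists l s Hs), Hxs. }
  rewrite map_app; simpl; rewrite map_map; apply NoDup_app; [now apply IH | constructor |].
  - intros [s [E Hs]]%in_map_iff.
    destruct (in_nonempty_sublists l s Hs) as [Hne _]; destruct s as [|y s]; [easy|].
    assert (Hy : In y (x :: nil)) by (change (members (x :: nil) y); rewrite <- E; now right; left).
    destruct Hy as [<- | []]; apply (Hnotx _ Hs); now left.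
  - apply (NoDup_map_refine members); [now apply IH|].
    intros a b Ha Hb E; apply functional_extensionality; intros y.
    apply propositional_extensionality; unfold members.
    pose proof (equal_f E y) as Ey; unfold members in Ey; simpl in Ey.
    split; intros Hy.
    + assert (Hy' : x = y \/ In y b) by (rewrite <- Ey; now right).
      destruct Hy' as [<- | Hy']; [exfalso; exact (Hnotx a Ha Hy) | exact Hy'].
    + assert (Hy' : x = y \/ In y a) by (rewrite Ey; now right).
      destruct Hy' as [<- | Hy']; [exfalso; exact (Hnotx b Hb Hy) | exact Hy'].
  - intros p [s [<- Hs]]%in_map_iff Hp.
    apply (Hnotx s Hs); change (members s x).
    destruct Hp as [<- | [s' [<- _]]%in_map_iff]; now left.
Qed.
End NonemptySublists.

Lemma has_card_hyp {X : Type} (d : X -> X -> R) (k : nat) : is_metric d ->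
  has_card X k -> (1 <= k)%nat -> has_card (hyp X d) (2 ^ k - 1).
Proof.
  intros Hd [l [Hnd [Hl Hlen]]] Hk.
  assert (x0 : X) by (destruct l as [|x0 ?]; [simpl in Hlen; lia | exact x0]).
  (* [hd x0 s :: s] is never empty and has the members of [s] whenever [s] is nonempty. *)
  set (mk := fun s : list X =>
    exist (fun A => (exists x, A x) /\ closed d A) (members (hd x0 s :: s))
      (conj (ex_intro _ (hd x0 s) (or_introl eq_refl)) (finite_closed d l Hl _ Hd))).
  assert (Hmk : forall s y, s <> nil -> (proj1_sig (mk s) y <-> In y s)).
  { intros [|z s] y Hs; [easy|]; simpl; unfold members; simpl; tauto. }
  exists (map mk (nonempty_sublists l)); split; [|split].
  - apply (NoDup_map_refine members); [now apply NoDup_members_nonempty_sublists|].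
    intros a b Ha Hb E.
    apply functional_extensionality; intros y; apply propositional_extensionality.
    rewrite <- (Hmk a y), <- (Hmk b y), E; [tauto | ..];
      apply in_nonempty_sublists with l; assumption.
  - intros A; apply in_map_iff.
    destruct (nonempty_sublists_complete l (proj1_sig A)) as [s [Hs Hsp]].
    { destruct (hyp_nonempty d A) as [x Hx]; now exists x. }
    exists s; split; [|exact Hs].
    apply hyp_ext; intros y; rewrite Hmk by (now apply (in_nonempty_sublists l s)).
    rewrite Hsp; split; [tauto | auto].
  - rewrite length_map, <- Hlen; pose proof (length_nonempty_sublists l); lia.
Qed.

(** * Separations of the two pairs *)

Lemma has_card_1_eq {T : Type} : has_card T 1 -> forall x y : T, x = y.
Proof.
  intros [[|a [|b l]] [_ [Hl Hlen]]] x y; simpl in Hlen; try lia.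
  destruct (Hl x) as [<- | []], (Hl y) as [<- | []]; reflexivity.
Qed.

Lemma has_card_simplex n : (1 <= n)%nat -> has_card (simplex n) n.
Proof.
  intros Hn.
  (* clamping the index makes the map total; it is the identity on [seq 0 n] *)
  set (mk := fun i : nat =>
         exist (fun i => (i < n)%nat) (Nat.min i (n - 1)) ltac:(cbv beta; lia) : simplex n).
  exists (map mk (seq 0 n)); split; [|split].
  - apply NoDup_map_NoDup_ForallPairs; [|apply seq_NoDup].
    intros i j Hi%in_seq Hj%in_seq E; apply (f_equal (@proj1_sig _ _)) in E; simpl in E; lia.
  - intros [k Hk]; apply in_map_iff; exists k; split; [|apply in_seq; lia].
    apply subset_eq_compat; lia.
  - now rewrite length_map, length_seq.
Qed.

Section Separation.
Context {X Y : Type} (dY : Y -> Y -> R) (t : R).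
Hypothesis HY : is_metric dY.

Let dY_refl y : dY y y = 0 := proj2 (proj1 (proj2 HY) y y) eq_refl.

Lemma surjective_separation_lt N k : has_card X N -> has_card Y k -> (1 <= k < N)%nat ->
  surjective_separation X dY t 0.
Proof.
  intros HXN HYk Hk; split.
  - destruct (has_card_surjection N k HXN HYk ltac:(lia)) as [σ [Hsurj _]].
    exists σ; split; [exact Hsurj | intros; apply HY].
  - right; intros h.
    destruct (has_card_pigeonhole N k HXN HYk ltac:(lia) h) as [x [x' [Hne E]]].
    exists x, x'; split; [exact Hne | rewrite E, dY_refl; apply Rle_refl].
Qed.

Lemma surjective_separation_eq N e : has_card X N -> has_card Y N ->
  (forall y y', y <> y' -> e <= dY y y') -> (exists y1 y2, y1 <> y2 /\ dY y1 y2 = e) ->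
  surjective_separation X dY t e.
Proof.
  intros HXN HYN Hsep [y1 [y2 [Hne12 He]]].
  assert (HN : (1 <= N)%nat).
  { destruct HYN as [[|y l] [_ [Hl Hlen]]]; [destruct (Hl y1) | simpl in Hlen; lia]. }
  destruct (has_card_surjection N N HXN HYN ltac:(lia)) as [σ [Hsurj Hinj]].
  split.
  - exists σ; split; [exact Hsurj|].
    intros x x' Hne; apply Hsep; intros E; apply Hne, (Hinj eq_refl), E.
  - right; intros h.
    destruct (classic (forall x x', h x = h x' -> x = x')) as [Hinjh | Hcollapse].
    + destruct (has_card_inj_surj N HXN HYN h Hinjh y1) as [x1 <-].
      destruct (has_card_inj_surj N HXN HYN h Hinjh y2) as [x2 <-].
      exists x1, x2; split; [now intros -> | rewrite He; apply Rle_refl].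
    + apply not_all_ex_not in Hcollapse as [x Hcollapse].
      apply not_all_ex_not in Hcollapse as [x' Hcollapse].
      apply imply_to_and in Hcollapse as [E Hne].
      exists x, x'; split; [exact Hne|].
      rewrite E, dY_refl, <- He; apply HY.
Qed.

Lemma surjective_separation_one : has_card X 1 -> has_card Y 1 -> surjective_separation X dY t t.
Proof.
  intros HX1 HY1; split; [|left; apply Rle_refl].
  destruct (has_card_surjection 1 1 HX1 HY1 ltac:(lia)) as [σ [Hsurj _]].
  exists σ; split; [exact Hsurj|].
  intros x x' Hne; exfalso; apply Hne, (has_card_1_eq HX1).
Qed.
End Separation.

Lemma hyp_min_separation {X : Type} (d : X -> X -> R) (Hd : is_metric d) Dm (a b : X) :
  (forall x y, d x y <= Dm) -> a <> b -> (forall x y, x <> y -> d a b <= d x y) ->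
  (forall A B, A <> B -> d a b <= hyp_dist d A B) /\
  exists A B, A <> B /\ hyp_dist d A B = d a b.
Proof.
  intros Hbd Hab Hmin; split.
  - intros A B; apply (hyp_dist_ge_separation d Dm Hd Hbd); exact Hmin.
  - exists (hyp_singleton d Hd a), (hyp_singleton d Hd b); split.
    + intros E; apply Hab, (hyp_singleton_inj d Hd), E.
    + apply hyp_dist_singleton.
Qed.

Lemma simplex_common_separation (M : Type) (dM : M -> M -> R) (m n : nat) (t : R) :
  is_metric dM -> has_card M m -> (1 <= m <= n)%nat -> 0 < t ->
  exists e, surjective_separation (simplex n) dM t e /\
    surjective_separation (hyp (simplex n) (simplex_dist n t)) (hyp_dist dM) t e.
Proof.
  intros HdM HM Hmn Ht.
  pose proof HM as [l [Hnd [Hl Hlen]]].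
  destruct (finite_diameter dM l Hl) as [a0 [b0 Hbd]].
  { destruct l as [|x ?]; [simpl in Hlen; lia | now constructor]. }
  pose proof (hyp_dist_is_metric dM _ HdM Hbd) as HdH.
  assert (HSn : has_card (simplex n) n) by (apply has_card_simplex; lia).
  assert (HHSn : has_card (hyp (simplex n) (simplex_dist n t)) (2 ^ n - 1)).
  { apply has_card_hyp; [|exact HSn | lia].
    apply (simplex_metric_is_metric _ t Ht), simplex_dist_is_simplex_metric. }
  assert (HHM : has_card (hyp M dM) (2 ^ m - 1)) by (apply has_card_hyp; auto; lia).
  assert (Hpow : (2 <= 2 ^ m)%nat) by (apply (Nat.pow_le_mono_r 2 1); lia).
  destruct (Nat.lt_ge_cases m n) as [Hlt | Hge]; [|assert (m = n) as <- by lia].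
  - assert (Hpow' : (2 ^ m < 2 ^ n)%nat) by (apply Nat.pow_lt_mono_r; lia).
    exists 0; split.
    + apply (surjective_separation_lt dM t HdM n m); auto; lia.
    + apply (surjective_separation_lt (hyp_dist dM) t HdH (2 ^ n - 1) (2 ^ m - 1)); auto; lia.
  - destruct (Nat.le_gt_cases m 1) as [Hm1 | Hm2].
    + assert (m = 1%nat) as -> by lia.
      exists t; split; apply surjective_separation_one; auto.
    + destruct l as [|a [|b l']]; simpl in Hlen; try lia.
      assert (Hab : a <> b) by (intros <-; inversion_clear Hnd as [|? ? Ha _]; apply Ha; now left).
      destruct (finite_min_separation dM (a :: b :: l') Hl (ex_intro _ a (ex_intro _ b Hab)))
        as [x [y [Hxy Hmin]]].
      destruct (hyp_min_separation dM HdM _ x y Hbd Hxy Hmin) as [HminH HattH].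
      exists (dM x y); split.
      * apply (surjective_separation_eq dM t HdM m); eauto.
      * apply (surjective_separation_eq (hyp_dist dM) t HdH (2 ^ m - 1)); auto.
Qed.

Theorem mainTheorem12 (M : Type) (dM : M -> M -> R) (m n : nat) (t : R) :
  is_metric dM ->
  (exists l : list M, NoDup l /\ (forall x, In x l) /\ length l = m) ->
  (1 <= m)%nat ->
  (m <= n)%nat ->
  0 < t ->
  dGH (simplex n) (simplex_dist n t) M dM =
  dGH (hyp (simplex n) (simplex_dist n t)) (hyp_dist (simplex_dist n t))
      (hyp M dM) (hyp_dist dM).
Proof.
  intros HdM HM Hm Hmn Ht.
  destruct (simplex_common_separation M dM m n t HdM HM ltac:(lia) Ht) as [e [HsepS HsepH]].
  pose proof HM as [l [_ [Hl Hlen]]].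
  destruct (finite_diameter dM l Hl) as [a [b Hdiam]].
  { destruct l as [|x ?]; [simpl in Hlen; lia | now constructor]. }
  pose proof (simplex_dist_is_simplex_metric n t) as HS.
  rewrite (dGH_simplex (simplex_dist n t) dM t (dM a b) e); auto; [|now exists a, b].
  rewrite (dGH_simplex (hyp_dist (simplex_dist n t)) (hyp_dist dM) t (dM a b) e); auto.
  - now apply hyp_dist_simplex_metric.
  - now apply (hyp_dist_is_metric dM (dM a b)).
  - now apply (hyp_dist_le dM (dM a b)).
  - exists (hyp_singleton dM HdM a), (hyp_singleton dM HdM b); apply hyp_dist_singleton.
Qed.
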